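(* Let $P$ be a program. $[\![P]\!]_{\mathrm{GC}}$ is pointer-race-free if and only if there is no computation $\sigma_1.\mathit{act}_1.\sigma_2.\mathit{act}_2\in[\![P]\!]_{\mathrm{GC}}$ satisfying all of the following: - the command of $\mathit{act}_1$ is $\mathtt{free}(x)$ with $h_{\sigma_1}(x)=a\neq\mathtt{seg}$; - the command of $\mathit{act}_2$ accesses $y.\mathtt{next}$ or $y.\mathtt{data}$, or is $\mathtt{free}(y)$, or is an assertion mentioning $y$, for some pointer variable $y$; - $h_{\sigma_1.\mathit{act}_1.\sigma_2}(y)=a$.
   Context: Programs. Programs are sets of threads (while-programs) over pointer variables $\mathit{PVar}$ and data variables $\mathit{DVar}$. The commands are: - $\mathtt{assert}\ c$, with $c::=x=y\mid u=v\mid\neg c$ and complementary asserts at each location; - $x:=\mathtt{malloc}$; - $\mathtt{free}(x)$; - $y:=x.\mathtt{next}$, $x.\mathtt{next}:=y$, $x:=y$; - $u:=x.\mathtt{data}$, $x.\mathtt{data}:=u$; - $u:=\mathit{op}(\dots)$. Heaps. A heap is $h=(\mathit{pval},\mathit{dval})$ with partial maps from $\mathit{PExp}=\mathit{PVar}\cup\{a.\mathtt{next}_i\}$ to $\mathit{Adr}\ni\mathtt{seg}$, and from $\mathit{DExp}=\mathit{DVar}\cup\{a.\mathtt{data}\}$ to data. $h_\sigma$ is the heap after $\sigma$ and $\mathrm{adr}(h)$ the set of addresses occurring in $h$. Garbage-collected semantics $[\![P]\!]_{\mathrm{GC}}$. Initially pointer variables are $\mathtt{seg}$. The rules are: - Assignments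 behave as usual; selector access through $x$ needs $h_\sigma(x)\neq\mathtt{seg}$. - Asserts pass if they hold or a compared pointer is $\mathtt{seg}$. - $\mathtt{free}$ has no update. - Malloc returns a never-used address $a\notin\mathrm{adr}(h_\sigma)$, with $a.\mathtt{data}$ arbitrary and $a.\mathtt{next}_i\mapsto\mathtt{seg}$. Valid pointers. The set $\mathrm{valid}(\sigma)\subseteq\mathit{PExp}$ is all of $\mathit{PExp}$ initially. For each command: - malloc into $x$ adds $x$; - $\mathtt{free}(x)$ with $h_\sigma(x)=a\neq\mathtt{seg}$ removes all $e$ with $h_\sigma(e)=a$ and all $a.\mathtt{next}_i$; - $x:=y$ makes $x$ valid iff $y$ is valid; - $x.\mathtt{next}:=y$ with $h_\sigma(x)=a$ makes $a.\mathtt{next}$ valid iff $y$ is valid; - $y:=x.\mathtt{next}$ with $h_\sigma(x)=a$ makes $y$ valid iff $x$ and $a.\mathtt{next}$ are valid. Pointer race. A pointer race is an action executing $\mathtt{free}(x)$, reading/writing $x.\mathtt{next}$ or $x.\mathtt{data}$, or an assertion mentioning pointer variable $x$, with $x$ not valid before the action. A set is PRF if none of its computations has a prefix that is a pointer race. *)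

From Stdlib Require Import List Arith PeanoNat.
Import ListNotations.
Set Implicit Arguments.

Section Model.

Variable Dat : Type.

Definition pvar := nat.
Definition dvar := nat.
Definition adr  := nat.
Definition sel  := nat.   (* index i of the selector next_i *)

Inductive pval_t := Seg | Ad (a : adr).

Inductive pexp := PV (x : pvar) | PNext (a : adr) (i : sel).
Inductive dexp := DV (u : dvar) | DData (a : adr).

Definition pexp_eq_dec (e f : pexp) : {e = f} + {e <> f}.
Proof. decide equality; apply Nat.eq_dec. Defined.
Definition dexp_eq_dec (e f : dexp) : {e = f} + {e <> f}.
Proof. decide equality; apply Nat.eq_dec. Defined.

Inductive cond :=
| CPeq (x y : pvar)
| CDeq (u v : dvar)
| CNeg (c : cond).

Inductive cmd :=
| Assert (c : cond)
| Malloc (x : pvar)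
| Free (x : pvar)
| LoadNext (y x : pvar) (i : sel)
| StoreNext (x : pvar) (i : sel) (y : pvar)
| AsgnP (x y : pvar)
| LoadData (u : dvar) (x : pvar)
| StoreData (x : pvar) (u : dvar)
| Op (u : dvar) (op : list Dat -> Dat) (args : list dvar).

(* while-programs: sequential composition, nondeterministic choice,
   nondeterministic loop (Kleene star), primitive commands; branching is
   done with (complementary) assertions. *)
Inductive stmt :=
| SCmd (c : cmd)
| SSeq (s1 s2 : stmt)
| SChoice (s1 s2 : stmt)
| SStar (s : stmt).

(* a program is a (finite) set of threads *)
Definition program := list stmt.

(* next c k k' : from the thread continuation k the thread can execute
   the command c and then continues with k'. *)
Inductive next : cmd -> list stmt -> list stmt -> Prop :=
| next_cmd c k : next c (SCmd c :: k) k
| next_seq c s1 s2 k k' : next c (s1 :: s2 :: k) k' -> next c (SSeq s1 s2 :: k) k'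
| next_choiceL c s1 s2 k k' : next c (s1 :: k) k' -> next c (SChoice s1 s2 :: k) k'
| next_choiceR c s1 s2 k k' : next c (s2 :: k) k' -> next c (SChoice s1 s2 :: k) k'
| next_star_exit c s k k' : next c k k' -> next c (SStar s :: k) k'
| next_star_iter c s k k' : next c (s :: SStar s :: k) k' -> next c (SStar s :: k) k'.

Record heap := mkHeap {
  pval : pexp -> option pval_t;
  dval : dexp -> option Dat }.

Definition h_init : heap :=
  mkHeap (fun e => match e with PV _ => Some Seg | PNext _ _ => None end)
         (fun _ => None).

Definition adr_of (h : heap) (a : adr) : Prop :=
  (exists e, pval h e = Some (Ad a)) \/
  (exists i, pval h (PNext a i) <> None) \/
  dval h (DData a) <> None.

Definition updP (h : heap) (e : pexp) (v : pval_t) : heap :=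
  mkHeap (fun f => if pexp_eq_dec f e then Some v else pval h f) (dval h).
Definition updD (h : heap) (e : dexp) (d : Dat) : heap :=
  mkHeap (pval h) (fun f => if dexp_eq_dec f e then Some d else dval h f).

Fixpoint cond_pvars (c : cond) : list pvar :=
  match c with
  | CPeq x y => [x; y]
  | CDeq _ _ => []
  | CNeg c => cond_pvars c
  end.

Fixpoint cond_holds (h : heap) (c : cond) : Prop :=
  match c with
  | CPeq x y => pval h (PV x) = pval h (PV y)
  | CDeq u v => dval h (DV u) = dval h (DV v)
  | CNeg c => ~ cond_holds h c
  end.

Definition assert_passes (h : heap) (c : cond) : Prop :=
  cond_holds h c \/ exists x, In x (cond_pvars c) /\ pval h (PV x) = Some Seg.

Fixpoint dvals (h : heap) (us : list dvar) : option (list Dat) :=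
  match us with
  | [] => Some []
  | u :: us' => match dval h (DV u), dvals h us' with
                | Some d, Some ds => Some (d :: ds)
                | _, _ => None
                end
  end.

Inductive gcstep : heap -> cmd -> heap -> Prop :=
| gc_assert h c : assert_passes h c -> gcstep h (Assert c) h
| gc_malloc h x a d :
    ~ adr_of h a ->
    gcstep h (Malloc x)
      (mkHeap (fun f => match f with
                        | PV y => if Nat.eq_dec y x then Some (Ad a) else pval h f
                        | PNext b i => if Nat.eq_dec b a then Some Seg else pval h f
                        end)
              (fun f => if dexp_eq_dec f (DData a) then Some d else dval h f))
| gc_free h x : gcstep h (Free x) h
| gc_loadnext h y x i a v :
    pval h (PV x) = Some (Ad a) -> pval h (PNext a i) = Some v ->
    gcstep h (LoadNext y x i) (updP h (PV y) v)
| gc_storenext h x i y a v :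
    pval h (PV x) = Some (Ad a) -> pval h (PV y) = Some v ->
    gcstep h (StoreNext x i y) (updP h (PNext a i) v)
| gc_asgnp h x y v :
    pval h (PV y) = Some v -> gcstep h (AsgnP x y) (updP h (PV x) v)
| gc_loaddata h u x a d :
    pval h (PV x) = Some (Ad a) -> dval h (DData a) = Some d ->
    gcstep h (LoadData u x) (updD h (DV u) d)
| gc_storedata h x u a d :
    pval h (PV x) = Some (Ad a) -> dval h (DV u) = Some d ->
    gcstep h (StoreData x u) (updD h (DData a) d)
| gc_op h u op args ds :
    dvals h args = Some ds -> gcstep h (Op u op args) (updD h (DV u) (op ds)).

Record act := mkAct { tid : nat; com : cmd; post : heap }.

Definition heap_after (s : list act) : heap :=
  fold_left (fun _ a => post a) s h_init.

Fixpoint set_nth {A} (l : list A) (n : nat) (v : A) : list A :=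
  match l, n with
  | [], _ => []
  | _ :: l', 0 => v :: l'
  | x :: l', S n' => x :: set_nth l' n' v
  end.

Inductive reach (P : program) : list act -> list (list stmt) -> heap -> Prop :=
| reach_nil : reach P [] (map (fun s => [s]) P) h_init
| reach_step s ctl h t c k' h' :
    reach P s ctl h -> t < length ctl ->
    next c (nth t ctl []) k' -> gcstep h c h' ->
    reach P (s ++ [mkAct t c h']) (set_nth ctl t k') h'.

Definition sem_GC (P : program) : list act -> Prop :=
  fun s => exists ctl h, reach P s ctl h.

Definition valid_step (h : heap) (c : cmd) (V : pexp -> Prop) : pexp -> Prop :=
  match c with
  | Malloc x => fun e => e = PV x \/ V e
  | Free x =>
      match pval h (PV x) with
      | Some (Ad a) => fun e => V e /\ pval h e <> Some (Ad a) /\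
                                 (forall i, e <> PNext a i)
      | _ => V
      end
  | AsgnP x y => fun e => if pexp_eq_dec e (PV x) then V (PV y) else V e
  | StoreNext x i y =>
      match pval h (PV x) with
      | Some (Ad a) => fun e => if pexp_eq_dec e (PNext a i) then V (PV y) else V e
      | _ => V
      end
  | LoadNext y x i =>
      match pval h (PV x) with
      | Some (Ad a) => fun e => if pexp_eq_dec e (PV y)
                                then V (PV x) /\ V (PNext a i) else V e
      | _ => V
      end
  | _ => V
  end.

Fixpoint valid_from (h : heap) (V : pexp -> Prop) (s : list act) : pexp -> Prop :=
  match s with
  | [] => V
  | a :: s' => valid_from (post a) (valid_step h (com a) V) s'
  end.

Definition valid (s : list act) : pexp -> Prop := valid_from h_init (fun _ => True) s.

Definition deref_vars (c : cmd) : list pvar :=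
  match c with
  | Free x | LoadNext _ x _ | StoreNext x _ _ | LoadData _ x | StoreData x _ => [x]
  | Assert c => cond_pvars c
  | _ => []
  end.

Definition pointer_race (s : list act) (a : act) : Prop :=
  exists x, In x (deref_vars (com a)) /\ ~ valid s (PV x).

Definition PRF (S : list act -> Prop) : Prop :=
  forall t, S t -> forall s a u, t = s ++ a :: u -> ~ pointer_race s a.

End Model.

From Stdlib Require Import List Arith Lia Classical.
Import ListNotations.
Set Implicit Arguments.
Unset Strict Implicit.

(* Under garbage collection a freed cell is never reclaimed: its data field stays
   defined, so malloc never returns a freed address again.  Hence, along every
   computation, a pointer expression holding an address freed earlier is invalid,
   which makes the pattern of the theorem a pointer race.  Conversely, as long as
   no race has happened, every invalid pointer expression holds a freed address
   or is a next field of a freed cell; applied at the first race, this yields the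
   pattern. *)

Section PointerRaces.

Variable Dat : Type.
Implicit Types (s : list (act Dat)) (h : heap Dat) (c : cmd Dat) (V : pexp -> Prop).

Lemma heap_after_snoc s a : heap_after (s ++ [a]) = post a.
Proof. unfold heap_after. now rewrite fold_left_app. Qed.

Lemma valid_snoc s a : valid (s ++ [a]) = valid_step (heap_after s) (com a) (valid s).
Proof.
  unfold valid, heap_after. generalize (h_init Dat) (fun _ : pexp => True).
  induction s as [|a0 s IH]; intros h V; simpl; auto.
Qed.

Definition freed s (b : adr) : Prop :=
  exists s1 a1 s2 x, s = s1 ++ a1 :: s2 /\ com a1 = Free Dat x /\
                     pval (heap_after s1) (PV x) = Some (Ad b).

Lemma freed_nil b : ~ freed [] b.
Proof. intros (s1 & a1 & s2 & x & Hs & _). now destruct s1. Qed.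

Lemma freed_snoc s a b :
  freed (s ++ [a]) b <->
  freed s b \/ exists x, com a = Free Dat x /\ pval (heap_after s) (PV x) = Some (Ad b).
Proof.
  split.
  - intros (s1 & a1 & s2 & x & Hs & Hc & Hx).
    destruct s2 as [|z s2'] using rev_ind.
    + apply app_inj_tail in Hs as [-> ->]. right; eauto.
    + rewrite app_comm_cons, app_assoc in Hs. apply app_inj_tail in Hs as [-> ->].
      left. now exists s1, a1, s2', x.
  - intros [(s1 & a1 & s2 & x & -> & Hc & Hx) | (x & Hc & Hx)].
    + exists s1, a1, (s2 ++ [a]), x. now rewrite <- app_assoc.
    + now exists s, a, [], x.
Qed.

Definition allocated h (b : adr) : Prop := dval h (DData b) <> None.

Lemma gcstep_allocated h c h' b : gcstep h c h' -> allocated h b -> allocated h' b.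
Proof.
  unfold allocated. intros Hs Hb; destruct Hs; unfold updD, updP; cbn [dval]; auto.
  all: destruct dexp_eq_dec; congruence.
Qed.

Lemma gcstep_pointee_origin h c h' e b :
  gcstep h c h' -> pval h' e = Some (Ad b) ->
  (exists e', pval h e' = Some (Ad b)) \/ allocated h' b.
Proof.
  intros Hs He; destruct Hs; unfold updD, updP in He; cbn [pval] in He; eauto.
  2-4: destruct pexp_eq_dec in He; [injection He as ->|]; eauto.
  destruct e as [y | b' i].
  - destruct (Nat.eq_dec y x); [|eauto].
    injection He as <-. right. unfold allocated; cbn [dval].
    now destruct dexp_eq_dec.
  - destruct (Nat.eq_dec b' a); [discriminate | eauto].
Qed.

Lemma gcstep_valid_origin h c h' V e b :
  gcstep h c h' -> valid_step h c V e -> pval h' e = Some (Ad b) ->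
  (exists e', V e' /\ pval h e' = Some (Ad b)) \/ ~ adr_of h b.
Proof.
  intros Hs Hv He; destruct Hs; cbn [valid_step] in Hv;
    unfold updD, updP in He; cbn [pval] in He; eauto.
  - destruct e as [y | b' i].
    + destruct (Nat.eq_dec y x) as [->|Hyx]; [injection He as <-; now right|].
      destruct Hv as [Heq | Hv]; [congruence | eauto].
    + destruct (Nat.eq_dec b' a); [discriminate|].
      destruct Hv as [Heq | Hv]; [discriminate | eauto].
  - left; exists e; split; [|assumption].
    destruct (pval h (PV x)) as [[|a]|]; tauto.
  - rewrite H in Hv. destruct pexp_eq_dec as [->|] in He, Hv;
      [injection He as ->; left; exists (PNext a i); tauto | eauto].
  - rewrite H in Hv. destruct pexp_eq_dec as [->|] in He, Hv;
      [injection He as ->; eauto | eauto].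
  - destruct pexp_eq_dec as [->|] in He, Hv; [injection He as ->; eauto | eauto].
Qed.

(* The side condition on a [PNext] source holds because a next field is only
   read through a variable that the step must not race on. *)
Lemma gcstep_invalid_origin h c h' V e :
  gcstep h c h' -> ~ valid_step h c V e ->
  (forall y, In y (deref_vars c) -> V (PV y)) ->
  (~ V e /\ forall v, pval h e = Some v -> pval h' e = Some v) \/
  (exists e', ~ V e' /\ pval h' e = pval h e' /\
     forall b i, e' = PNext b i -> exists x, V (PV x) /\ pval h (PV x) = Some (Ad b)) \/
  (exists x b, c = Free Dat x /\ h' = h /\ pval h (PV x) = Some (Ad b) /\
     ((exists i, e = PNext b i) \/ pval h e = Some (Ad b))).
Proof.
  intros Hs Hv Hderef; destruct Hs; cbn [valid_step] in Hv;
    unfold updD, updP; cbn [pval]; eauto.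
  - left; split; [tauto|].
    intros v Hv'. destruct e as [y | b i].
    + destruct (Nat.eq_dec y x) as [->|]; [tauto | assumption].
    + destruct (Nat.eq_dec b a) as [->|]; [|assumption].
      exfalso. apply H. right; left. exists i; congruence.
  - destruct (pval h (PV x)) as [[|a]|] eqn:Hx; eauto.
    destruct (classic (V e)) as [Ve|]; [|eauto].
    right; right. exists x, a. do 3 (split; [reflexivity || assumption|]).
    destruct (classic (pval h e = Some (Ad a))); [now right|].
    left. apply NNPP. intros Hi. apply Hv. split; [assumption|]. split; [assumption|].
    intros i ->. apply Hi; eauto.
  - rewrite H in Hv. destruct pexp_eq_dec as [->|]; [|eauto].
    right; left. exists (PNext a i). split; [|split; [congruence|]].
    + intros Hi. apply Hv. split; [apply Hderef; now left | assumption].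
    + intros b i' [= -> ->]. exists x. split; [apply Hderef; now left | assumption].
  - rewrite H in Hv. destruct pexp_eq_dec as [->|]; [|eauto].
    right; left. exists (PV y). repeat split; [assumption | congruence | discriminate].
  - destruct pexp_eq_dec as [->|]; [|eauto].
    right; left. exists (PV y). repeat split; [assumption | congruence | discriminate].
Qed.

Definition race_free s : Prop :=
  forall s0 a u, s = s0 ++ a :: u -> ~ pointer_race s0 a.

Lemma race_free_snoc s a : race_free (s ++ [a]) -> race_free s /\ ~ pointer_race s a.
Proof.
  intros Hrf. split.
  - intros s0 a0 u ->. apply (Hrf s0 a0 (u ++ [a])). now rewrite <- app_assoc.
  - now apply (Hrf s a []).
Qed.

Lemma first_race s a u :
  pointer_race s a ->
  exists s0 a0 u0, s ++ a :: u = s0 ++ a0 :: u0 /\ race_free s0 /\ pointer_race s0 a0.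
Proof.
  remember (length s) as n eqn:Hn. revert s a u Hn.
  induction n as [n IH] using lt_wf_ind. intros s a u -> Hrace.
  destruct (classic (race_free s)) as [Hrf | Hnrf]; [exists s, a, u; auto|].
  apply not_all_ex_not in Hnrf as [s0 Hnrf].
  apply not_all_ex_not in Hnrf as [a0 Hnrf].
  apply not_all_ex_not in Hnrf as [u0 Hnrf].
  apply imply_to_and in Hnrf as [-> Hrace0]. apply NNPP in Hrace0.
  destruct (IH (length s0)) with (s := s0) (a := a0) (u := u0 ++ a :: u)
    as (s1 & a1 & u1 & Heq & Hrf1 & Hrace1); auto.
  - rewrite length_app; cbn; lia.
  - exists s1, a1, u1. rewrite <- app_assoc. auto.
Qed.

Definition dangling s h (e : pexp) : Prop :=
  exists b, freed s b /\ ((exists i, e = PNext b i) \/ pval h e = Some (Ad b)).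

Variable P : program Dat.

Lemma reach_heap_after s ctl h : reach P s ctl h -> heap_after s = h.
Proof. destruct 1; [reflexivity | apply heap_after_snoc]. Qed.

Lemma reach_prefix t ctl h :
  reach P t ctl h -> forall s u, t = s ++ u -> sem_GC P s.
Proof.
  induction 1 as [|t ctl h i c k' h' Hr IH]; intros s u Heq.
  - apply eq_sym, app_eq_nil in Heq as [-> ->]. repeat econstructor.
  - destruct u as [|z u] using rev_ind.
    + rewrite app_nil_r in Heq; subst s. repeat econstructor; eassumption.
    + rewrite app_assoc in Heq. apply app_inj_tail in Heq as [-> _]. eauto.
Qed.

Lemma sem_GC_prefix s u : sem_GC P (s ++ u) -> sem_GC P s.
Proof. intros (ctl & h & Hr). eapply reach_prefix; eauto. Qed.

Lemma reach_pointee_allocated s ctl h e b :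
  reach P s ctl h -> pval h e = Some (Ad b) -> allocated h b.
Proof.
  intros Hr; revert e; induction Hr as [|s ctl h t c k' h' Hr IH _ _ Hs]; intros e He.
  - destruct e; discriminate.
  - destruct (gcstep_pointee_origin Hs He) as [[e' He'] | Hb]; [|assumption].
    exact (gcstep_allocated Hs (IH _ He')).
Qed.

Lemma reach_freed_allocated s ctl h b : reach P s ctl h -> freed s b -> allocated h b.
Proof.
  induction 1 as [|s ctl h t c k' h' Hr IH _ _ Hs]; intros Hf.
  - now apply freed_nil in Hf.
  - apply freed_snoc in Hf as [Hf | (x & Hc & Hx)].
    + exact (gcstep_allocated Hs (IH Hf)).
    + cbn in Hc; subst c. inversion Hs; subst.
      rewrite (reach_heap_after Hr) in Hx. exact (reach_pointee_allocated Hr Hx).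
Qed.

Lemma reach_freed_pointer_invalid s ctl h b e :
  reach P s ctl h -> freed s b -> pval h e = Some (Ad b) -> ~ valid s e.
Proof.
  intros Hr; revert b e; induction Hr as [|s ctl h t c k' h' Hr IH _ _ Hs];
    intros b e Hf He.
  - now apply freed_nil in Hf.
  - rewrite valid_snoc, (reach_heap_after Hr); cbn [com].
    apply freed_snoc in Hf as [Hf | (x & Hc & Hx)].
    + intros Hv. destruct (gcstep_valid_origin Hs Hv He) as [(e' & Hv' & He') | Hfresh].
      * exact (IH _ _ Hf He' Hv').
      * apply Hfresh. right; right. exact (reach_freed_allocated Hr Hf).
    + cbn in Hc; subst c. inversion Hs; subst.
      rewrite (reach_heap_after Hr) in Hx. cbn. rewrite Hx.
      intros (_ & Hne & _). congruence.
Qed.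

Lemma reach_invalid_dangling s ctl h e :
  reach P s ctl h -> race_free s -> ~ valid s e -> dangling s h e.
Proof.
  intros Hr; revert e; induction Hr as [|s ctl h t c k' h' Hr IH _ _ Hs];
    intros e Hrf Hv.
  - now contradict Hv.
  - apply race_free_snoc in Hrf as [Hrf Hrace].
    assert (Hderef : forall y, In y (deref_vars c) -> valid s (PV y)).
    { intros y Hy. apply NNPP. intros Hy'. apply Hrace. now exists y. }
    assert (Hold : forall b, freed s b -> freed (s ++ [mkAct t c h']) b)
      by (intros b Hb; apply freed_snoc; now left).
    rewrite valid_snoc, (reach_heap_after Hr) in Hv; cbn [com] in Hv.
    destruct (gcstep_invalid_origin Hs Hv Hderef) as
      [[Hv' Hkeep] | [(e' & Hv' & He & Hsrc) | (x & b & -> & -> & Hx & He)]].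
    + destruct (IH _ Hrf Hv') as (b & Hb & He).
      exists b; split; [auto|]. destruct He; auto.
    + destruct (IH _ Hrf Hv') as (b & Hb & [[i ->] | He']).
      * destruct (Hsrc _ _ eq_refl) as (x & Hvx & Hx).
        exfalso. exact (reach_freed_pointer_invalid Hr Hb Hx Hvx).
      * exists b. split; [auto | right; congruence].
    + exists b. split; [|exact He].
      apply freed_snoc; right. exists x. now rewrite (reach_heap_after Hr).
Qed.

Lemma freed_pointer_race s a y b :
  sem_GC P s -> freed s b -> In y (deref_vars (com a)) ->
  pval (heap_after s) (PV y) = Some (Ad b) -> pointer_race s a.
Proof.
  intros (ctl & h & Hr) Hf Hy Hyb. exists y. split; [assumption|].
  rewrite (reach_heap_after Hr) in Hyb. exact (reach_freed_pointer_invalid Hr Hf Hyb).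
Qed.

Lemma first_race_after_free s a :
  sem_GC P s -> race_free s -> pointer_race s a ->
  exists y b, In y (deref_vars (com a)) /\ freed s b /\
              pval (heap_after s) (PV y) = Some (Ad b).
Proof.
  intros (ctl & h & Hr) Hrf (y & Hy & Hv).
  destruct (reach_invalid_dangling Hr Hrf Hv) as (b & Hb & [[i [=]] | Hyb]).
  exists y, b. rewrite (reach_heap_after Hr). auto.
Qed.

End PointerRaces.

Theorem mainTheorem8 (Dat : Type) (P : program Dat) :
  PRF (sem_GC P) <->
  ~ (exists (s1 : list (act Dat)) (a1 : act Dat) (s2 : list (act Dat)) (a2 : act Dat)
            (x y : pvar) (a : adr),
       sem_GC P (s1 ++ a1 :: s2 ++ [a2]) /\
       com a1 = @Free Dat x /\
       pval (heap_after s1) (PV x) = Some (Ad a) /\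
       In y (deref_vars (com a2)) /\
       pval (heap_after (s1 ++ a1 :: s2)) (PV y) = Some (Ad a)).
Proof.
  split.
  - intros Hprf (s1 & a1 & s2 & a2 & x & y & a & Hsem & Hc & Hx & Hy & Hya).
    rewrite app_comm_cons, app_assoc in Hsem.
    apply (Hprf _ Hsem (s1 ++ a1 :: s2) a2 [] eq_refl).
    eapply freed_pointer_race; [exact (sem_GC_prefix Hsem) | | exact Hy | exact Hya].
    now exists s1, a1, s2, x.
  - intros Hno t Ht s a u -> Hrace.
    destruct (first_race u Hrace) as (s0 & a0 & u0 & Heq & Hrf & Hrace0).
    assert (Hsem0 : sem_GC P (s0 ++ [a0])).
    { apply (sem_GC_prefix (u := u0)). rewrite <- app_assoc; cbn. now rewrite <- Heq. }
    destruct (first_race_after_free (sem_GC_prefix Hsem0) Hrf Hrace0)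
      as (y & b & Hy & (s1 & a1 & s2 & x & -> & Hc & Hx) & Hyb).
    apply Hno. exists s1, a1, s2, a0, x, y, b.
    rewrite <- app_assoc in Hsem0. auto.
Qed.
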